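(* For all $(n,k),(p,q)\in\mathcal{I}$, $$S^{n,k}_{p,q}=\int_0^1\Big(\phi^\alpha_{n,k}(t)+\frac{\alpha(t)-\beta(t)}{\sqrt{\Gamma(t)}}\psi^\alpha_{n,k}(t)\Big)\Big(\phi^\alpha_{p,q}(t)+\frac{\alpha(t)-\beta(t)}{\sqrt{\Gamma(t)}}\psi^\alpha_{p,q}(t)\Big)\,dt.$$
   Context: One-dimensional setting. Let $\alpha,\beta:[0,1]\to\mathbb{R}$ and $\sqrt{\Gamma}:[0,1]\to(0,\infty)$ be H\''older continuous, $\Gamma=(\sqrt{\Gamma})^2$. For $\gamma\in\{\alpha,\beta\}$ (corresponding to the process $dX_t=\gamma(t)X_tdt+\sqrt{\Gamma(t)}dW_t$, $X_0=0$) let $g_\gamma(t)=\exp(\int_0^t\gamma)$, $f_\gamma(t)=\sqrt{\Gamma(t)}\exp(-\int_0^t\gamma)$, $h_\gamma(t)=\int_0^tf_\gamma(s)^2ds$, $h_\gamma(s,t)=h_\gamma(t)-h_\gamma(s)$. $\mathcal{I}=\{(0,0)\}\cup\{(n,k):n\ge1,\ 0\le k<2^{n-1}\}$. Partition: fix $\rho\in(0,1)$ and reals $l_{n,k}<m_{n,k}<r_{n,k}$ ($n\ge1$) with $l_{1,0}=0$, $r_{1,0}=1$, $l_{n+1,2k}=l_{n,k}$, $r_{n+1,2k}=l_{n+1,2k+1}=m_{n,k}$, $r_{n+1,2k+1}=r_{n,k}$, $\max(r_{n,k}-m_{n,k},m_{n,k}-l_{n,k})<\rho(r_{n,k}-l_{n,k})$.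 For $n\ge1$, writing $l,m,r$ for $l_{n,k},m_{n,k},r_{n,k}$: $\sigma^\gamma_{n,k}=g_\gamma(m)\sqrt{h_\gamma(l,m)h_\gamma(m,r)/h_\gamma(l,r)}$, $L^\gamma_{n,k}=\sigma^\gamma_{n,k}/(g_\gamma(m)h_\gamma(l,m))$, $R^\gamma_{n,k}=\sigma^\gamma_{n,k}/(g_\gamma(m)h_\gamma(m,r))$, $M^\gamma_{n,k}=g_\gamma(m)/\sigma^\gamma_{n,k}$, and $\psi^\gamma_{n,k}(t)=g_\gamma(t)h_\gamma(l,t)L^\gamma_{n,k}$ on $[l,m]$, $g_\gamma(t)h_\gamma(t,r)R^\gamma_{n,k}$ on $[m,r]$, $0$ elsewhere. Also $\sigma^\gamma_{0,0}=g_\gamma(1)\sqrt{h_\gamma(0,1)}$, $L^\gamma_{0,0}=\sigma^\gamma_{0,0}/(g_\gamma(1)h_\gamma(0,1))$, $\psi^\gamma_{0,0}(t)=g_\gamma(t)h_\gamma(0,t)L^\gamma_{0,0}$. Let $\phi^\gamma_{n,k}(t)=\frac{1}{f_\gamma(t)}\frac{d}{dt}\big(\psi^\gamma_{n,k}(t)/g_\gamma(t)\big)$ (defined except at finitely many points). For continuous $x$: $\Delta^\gamma_{n,k}(x)=M^\gamma_{n,k}x(m)/g_\gamma(m)-L^\gamma_{n,k}x(l)/g_\gamma(l)-R^\gamma_{n,k}x(r)/g_\gamma(r)$ ($n\ge1$), $\Delta^\gamma_{0,0}(x)=L^\gamma_{0,0}x(1)/g_\gamma(1)$. Let $G^{i,j}_{n,k}=\Delta^\beta_{i,j}(\psi^\alpha_{n,k})$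 (the matrix of the coefficient lift operator mapping coefficients of the $\alpha$-process to those of the $\beta$-process) and $S^{n,k}_{p,q}=\sum_{(i,j)\in\mathcal{I}}G^{i,j}_{n,k}G^{i,j}_{p,q}$ (the matrix of $G^TG$). *)

From Stdlib Require Import Reals Lra Lia.
From Coquelicot Require Import Coquelicot.
Open Scope R_scope.

Definition holder01 (f : R -> R) : Prop :=
  exists (C a : R), 0 < a <= 1 /\
    forall s t, 0 <= s <= 1 -> 0 <= t <= 1 ->
      Rabs (f s - f t) <= C * Rpower (Rabs (s - t)) a.

Definition partition (rho : R) (l m r : nat -> nat -> R) : Prop :=
  0 < rho < 1 /\
  l 1%nat 0%nat = 0 /\ r 1%nat 0%nat = 1 /\
  forall n k : nat, (1 <= n)%nat -> (k < 2 ^ (n - 1))%nat ->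
    l n k < m n k < r n k /\
    Rmax (r n k - m n k) (m n k - l n k) < rho * (r n k - l n k) /\
    l (S n) (2 * k)%nat = l n k /\
    r (S n) (2 * k)%nat = m n k /\
    l (S n) (2 * k + 1)%nat = m n k /\
    r (S n) (2 * k + 1)%nat = r n k.

Definition inI (n k : nat) : Prop :=
  (n = 0%nat /\ k = 0%nat) \/ ((1 <= n)%nat /\ (k < 2 ^ (n - 1))%nat).

Section Coeffs.
Variables (gam sG : R -> R) (l m r : nat -> nat -> R).

Definition gfun (t : R) : R := exp (RInt gam 0 t).
Definition ffun (t : R) : R := sG t * exp (- RInt gam 0 t).
Definition hfun (t : R) : R := RInt (fun s => (ffun s) ^ 2) 0 t.
Definition hint (s t : R) : R := hfun t - hfun s.

Definition sigma (n k : nat) : R :=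
  if Nat.eqb n 0 then gfun 1 * sqrt (hint 0 1)
  else gfun (m n k) * sqrt (hint (l n k) (m n k) * hint (m n k) (r n k)
                             / hint (l n k) (r n k)).

Definition Lc (n k : nat) : R :=
  if Nat.eqb n 0 then sigma n k / (gfun 1 * hint 0 1)
  else sigma n k / (gfun (m n k) * hint (l n k) (m n k)).

Definition Rc (n k : nat) : R :=
  sigma n k / (gfun (m n k) * hint (m n k) (r n k)).

Definition Mc (n k : nat) : R := gfun (m n k) / sigma n k.

Definition psi (n k : nat) (t : R) : R :=
  if Nat.eqb n 0 then gfun t * hint 0 t * Lc n k
  else if Rle_dec (l n k) t then
         if Rle_dec t (m n k) then gfun t * hint (l n k) t * Lc n k
         else if Rle_dec t (r n k) then gfun t * hint t (r n k) * Rc n k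
         else 0
       else 0.

(* phi = (1/f) d/dt (psi/g); Derive is total, its value at the finitely
   many kinks is irrelevant for the integral. *)
Definition phi (n k : nat) (t : R) : R :=
  / ffun t * Derive (fun s => psi n k s / gfun s) t.

Definition Delta (n k : nat) (x : R -> R) : R :=
  if Nat.eqb n 0 then Lc n k * x 1 / gfun 1
  else Mc n k * x (m n k) / gfun (m n k)
       - Lc n k * x (l n k) / gfun (l n k)
       - Rc n k * x (r n k) / gfun (r n k).

End Coeffs.

Definition Gmat (alpha beta sG : R -> R) (l m r : nat -> nat -> R)
  (i j n k : nat) : R :=
  Delta beta sG l m r i j (psi alpha sG l m r n k).

Definition level_size (i : nat) : nat := if Nat.eqb i 0 then 1%nat else (2 ^ (i - 1))%nat.

Definition sumI (F : nat -> nat -> R) (N : nat) : R :=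
  sum_f_R0 (fun i => sum_f_R0 (fun j => F i j) (level_size i - 1)) N.

From Pilot Require Import Defs.
From Stdlib Require Import Reals Lra Lia.
From Coquelicot Require Import Coquelicot.
Open Scope R_scope.

(* Put [X = x / g_beta]. The coefficients [Delta^beta] obey a Parseval
   identity: summed over levels [0 .. N], [Delta^beta(x) Delta^beta(y)] equals
   the discrete covariance [sum_j dX_j dY_j / h_beta(I_j)] over the cells [I_j]
   of level [N + 1], since splitting a cell adds exactly the product of its two
   coefficients. For [x = psi^alpha_(n,k)], on every fine enough cell
   [psi^alpha / g_alpha] is affine in [h_alpha], so [X' = f_beta^2 V] with [V]
   continuous and [phi^alpha + (alpha - beta) / sqrt Gamma psi^alpha = f_beta V]
   there. As the mesh shrinks, uniform continuity of the finitely many such [V]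
   makes the discrete covariance converge to [int_0^1 f_beta^2 V_x V_y], the
   claimed integral. Absolute convergence follows from the diagonal case by
   [|a b| <= (a^2 + b^2) / 2]. *)

Fixpoint sum_first (f : nat -> R) (K : nat) : R :=
  match K with O => 0 | S K' => sum_first f K' + f K' end.

Lemma sum_f_R0_sum_first f K : sum_f_R0 f K = sum_first f (S K).
Proof. induction K as [|K IH]; simpl; [lra|]. rewrite IH; simpl; lra. Qed.

Lemma sum_first_pairs f K :
  sum_first f (2 * K) = sum_first (fun k => f (2 * k)%nat + f (2 * k + 1)%nat) K.
Proof.
  induction K as [|K IH]; [simpl; lra|].
  replace (2 * S K)%nat with (S (S (2 * K))) by lia. cbn [sum_first]. rewrite IH.
  replace (S (2 * K)) with (2 * K + 1)%nat by lia. lra.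
Qed.

Lemma sum_first_ext f g K :
  (forall j, (j < K)%nat -> f j = g j) -> sum_first f K = sum_first g K.
Proof.
  induction K as [|K IH]; intros H; simpl; [lra|].
  rewrite IH, H by (intros; try apply H; lia). lra.
Qed.

Lemma sum_first_plus f g K : sum_first (fun j => f j + g j) K = sum_first f K + sum_first g K.
Proof. induction K; simpl; lra. Qed.

Lemma sum_first_minus f g K : sum_first (fun j => f j - g j) K = sum_first f K - sum_first g K.
Proof. induction K; simpl; lra. Qed.

Lemma sum_first_scal c f K : sum_first (fun j => c * f j) K = c * sum_first f K.
Proof. induction K; simpl; lra. Qed.

Lemma sum_first_le f g K :
  (forall j, (j < K)%nat -> f j <= g j) -> sum_first f K <= sum_first g K.
Proof.
  induction K as [|K IH]; intros H; simpl; [lra|].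
  specialize (IH (fun j Hj => H j ltac:(lia))). specialize (H K ltac:(lia)). lra.
Qed.

Lemma sum_first_abs f K : Rabs (sum_first f K) <= sum_first (fun j => Rabs (f j)) K.
Proof.
  induction K; simpl; [rewrite Rabs_R0; lra|].
  eapply Rle_trans; [apply Rabs_triang|lra].
Qed.

Lemma pow2_succ b : (2 ^ S b = 2 * 2 ^ b)%nat.
Proof. simpl; lia. Qed.

Lemma pow2_pos b : (0 < 2 ^ b)%nat.
Proof. induction b; simpl; lia. Qed.

Lemma nat_double_or_succ j : (exists c, j = 2 * c)%nat \/ (exists c, j = 2 * c + 1)%nat.
Proof. destruct (Nat.Even_or_Odd j) as [[c H]|[c H]]; [left|right]; exists c; lia. Qed.

(** * The dyadic grid of a partition *)

(* Level [S b] of the partition consists of the [2 ^ b] intervals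
   [[l (S b) j, r (S b) j]], [j < 2 ^ b]. *)

Section Grid.
Variables (rho : R) (l m r : nat -> nat -> R).
Hypothesis Hpart : partition rho l m r.

Lemma partition_split b j : (j < 2 ^ b)%nat ->
    l (S b) j < m (S b) j < r (S b) j /\
    Rmax (r (S b) j - m (S b) j) (m (S b) j - l (S b) j) < rho * (r (S b) j - l (S b) j) /\
    l (S (S b)) (2 * j)%nat = l (S b) j /\
    r (S (S b)) (2 * j)%nat = m (S b) j /\
    l (S (S b)) (2 * j + 1)%nat = m (S b) j /\
    r (S (S b)) (2 * j + 1)%nat = r (S b) j.
Proof.
  intros Hj. destruct Hpart as (_ & _ & _ & H). apply H; [lia|].
  now replace (S b - 1)%nat with b by lia.
Qed.

Lemma grid_l_lt_r b j : (j < 2 ^ b)%nat -> l (S b) j < r (S b) j.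
Proof. intros H; destruct (partition_split b j H) as ((? & ?) & _); lra. Qed.

Lemma grid_r_eq_l_succ b j : (S j < 2 ^ b)%nat -> r (S b) j = l (S b) (S j).
Proof.
  revert j; induction b as [|b IH]; intros j H; [simpl in H; lia|].
  rewrite pow2_succ in H.
  destruct (nat_double_or_succ j) as [[c ->]|[c ->]].
  - destruct (partition_split b c ltac:(lia)) as (_ & _ & _ & -> & H3 & _).
    now replace (S (2 * c)) with (2 * c + 1)%nat by lia.
  - destruct (partition_split b c ltac:(lia)) as (_ & _ & _ & _ & _ & ->).
    rewrite IH by lia. replace (S (2 * c + 1)) with (2 * S c)%nat by lia.
    now destruct (partition_split b (S c) ltac:(lia)) as (_ & _ & -> & _).
Qed.

Lemma grid_l_0 b : l (S b) 0 = 0.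
Proof.
  induction b as [|b IH]; [now destruct Hpart as (_ & H & _)|].
  destruct (partition_split b 0 (pow2_pos b)) as (_ & _ & H & _). simpl in H. now rewrite H.
Qed.

Lemma grid_r_last b : r (S b) (2 ^ b - 1) = 1.
Proof.
  induction b as [|b IH]; [now destruct Hpart as (_ & _ & H & _)|].
  pose proof (pow2_pos b).
  destruct (partition_split b (2 ^ b - 1) ltac:(lia)) as (_ & _ & _ & _ & _ & Hlast).
  replace (2 ^ S b - 1)%nat with (2 * (2 ^ b - 1) + 1)%nat by (rewrite pow2_succ; lia).
  now rewrite Hlast.
Qed.

Lemma grid_l_mono b i j : (i <= j)%nat -> (j < 2 ^ b)%nat -> l (S b) i <= l (S b) j.
Proof.
  intros Hij Hj. induction j as [|j IH]; [replace i with 0%nat by lia; lra|].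
  destruct (Nat.eq_dec i (S j)) as [->|Hne]; [lra|].
  specialize (IH ltac:(lia) ltac:(lia)). rewrite <- grid_r_eq_l_succ by lia.
  pose proof (grid_l_lt_r b j ltac:(lia)). lra.
Qed.

Lemma grid_r_le_l b i j : (i < j)%nat -> (j < 2 ^ b)%nat -> r (S b) i <= l (S b) j.
Proof. intros. rewrite grid_r_eq_l_succ by lia. apply grid_l_mono; lia. Qed.

Lemma grid_r_mono b i j : (i <= j)%nat -> (j < 2 ^ b)%nat -> r (S b) i <= r (S b) j.
Proof.
  intros Hij Hj. destruct (Nat.eq_dec i j) as [->|]; [lra|].
  pose proof (grid_r_le_l b i j ltac:(lia) Hj). pose proof (grid_l_lt_r b j Hj). lra.
Qed.

Lemma grid_in_01 b j : (j < 2 ^ b)%nat -> 0 <= l (S b) j /\ r (S b) j <= 1.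
Proof.
  intros H. split.
  - rewrite <- (grid_l_0 b). apply grid_l_mono; lia.
  - rewrite <- (grid_r_last b). apply grid_r_mono; lia.
Qed.

Lemma grid_mesh b j : (j < 2 ^ b)%nat -> r (S b) j - l (S b) j <= rho ^ b.
Proof.
  revert j. induction b as [|b IH]; intros j H.
  - simpl in H. replace j with 0%nat by lia. rewrite grid_l_0.
    destruct Hpart as (_ & _ & -> & _). simpl; lra.
  - rewrite pow2_succ in H. destruct Hpart as (Hrho & _).
    assert (Hc : forall c, (c < 2 ^ b)%nat ->
              rho * (r (S b) c - l (S b) c) <= rho * rho ^ b)
      by (intros c Hc; apply Rmult_le_compat_l; [lra|apply IH, Hc]).
    destruct (nat_double_or_succ j) as [[c ->]|[c ->]];
      destruct (partition_split b c ltac:(lia)) as (_ & Hm & H1 & H2 & H3 & H4);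
      apply Rmax_Rlt in Hm; specialize (Hc c ltac:(lia)).
    + rewrite H1, H2; simpl; lra.
    + rewrite H3, H4; simpl; lra.
Qed.

Lemma grid_parent b j : (j < 2 ^ S b)%nat -> exists c, (c < 2 ^ b)%nat /\
   l (S b) c <= l (S (S b)) j /\ r (S (S b)) j <= r (S b) c.
Proof.
  intros H. rewrite pow2_succ in H.
  destruct (nat_double_or_succ j) as [[c ->]|[c ->]]; exists c; split; try lia;
    destruct (partition_split b c ltac:(lia)) as ((? & ?) & _ & H1 & H2 & H3 & H4).
  - rewrite H1, H2; lra.
  - rewrite H3, H4; lra.
Qed.

Lemma grid_nested_l d b i j : (i < 2 ^ b)%nat -> (j < 2 ^ (d + b))%nat ->
   r (S (d + b)) j <= l (S b) i \/ l (S b) i <= l (S (d + b)) j.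
Proof.
  revert j. induction d as [|d IH]; intros j Hi Hj; cbn [Nat.add] in *.
  - destruct (Nat.lt_ge_cases j i).
    + left; apply grid_r_le_l; lia.
    + right; apply grid_l_mono; lia.
  - destruct (grid_parent (d + b) j Hj) as (c & Hc & H1 & H2).
    destruct (IH c Hi Hc); [left|right]; lra.
Qed.

Lemma grid_nested_r d b i j : (i < 2 ^ b)%nat -> (j < 2 ^ (d + b))%nat ->
   r (S (d + b)) j <= r (S b) i \/ r (S b) i <= l (S (d + b)) j.
Proof.
  revert j. induction d as [|d IH]; intros j Hi Hj; cbn [Nat.add] in *.
  - destruct (Nat.le_gt_cases j i).
    + left; apply grid_r_mono; lia.
    + right; apply grid_r_le_l; lia.
  - destruct (grid_parent (d + b) j Hj) as (c & Hc & H1 & H2).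
    destruct (IH c Hi Hc); [left|right]; lra.
Qed.

Lemma grid_position b k N j : (k < 2 ^ b)%nat -> (S b <= N)%nat -> (j < 2 ^ N)%nat ->
  let a := l (S N) j in let c := r (S N) j in
  c <= l (S b) k \/ r (S b) k <= a \/
  (l (S b) k <= a /\ c <= m (S b) k) \/ (m (S b) k <= a /\ c <= r (S b) k).
Proof.
  intros Hk HN Hj a c.
  destruct (partition_split b k Hk) as (_ & _ & H1 & _ & H3 & H4).
  assert (E : N = ((N - S b) + S b)%nat) by lia.
  assert (Hj' : (j < 2 ^ ((N - S b) + S b))%nat) by now rewrite <- E.
  assert (k1 : (2 * k < 2 ^ S b)%nat) by (rewrite pow2_succ; lia).
  assert (k2 : (2 * k + 1 < 2 ^ S b)%nat) by (rewrite pow2_succ; lia).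
  pose proof (grid_nested_l _ _ _ _ k1 Hj') as S1.
  pose proof (grid_nested_l _ _ _ _ k2 Hj') as S2.
  pose proof (grid_nested_r _ _ _ _ k2 Hj') as S3.
  rewrite <- E, H1 in S1. rewrite <- E, H3 in S2. rewrite <- E, H4 in S3.
  fold a c in S1, S2, S3.
  destruct S1 as [S1|S1]; [now left|].
  destruct S3 as [S3|S3]; [|now right; left].
  destruct S2; right; right; [left|right]; split; assumption.
Qed.

Lemma RInt_grid_partial b (F : R -> R) K :
  (forall j, (j < 2 ^ b)%nat -> ex_RInt F (l (S b) j) (r (S b) j)) ->
  (1 <= K)%nat -> (K <= 2 ^ b)%nat ->
  ex_RInt F 0 (r (S b) (K - 1)) /\
  sum_first (fun j => RInt F (l (S b) j) (r (S b) j)) K = RInt F 0 (r (S b) (K - 1)).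
Proof.
  intros HF. induction K as [|K IH]; intros H1 H2; [lia|].
  destruct K as [|K].
  - simpl. rewrite (grid_l_0 b). split; [rewrite <- (grid_l_0 b); apply HF; lia|lra].
  - destruct (IH ltac:(lia) ltac:(lia)) as (E1 & E2).
    replace (S K - 1)%nat with K in * by lia. replace (S (S K) - 1)%nat with (S K) by lia.
    change (sum_first ?f (S (S K))) with (sum_first f (S K) + f (S K)). rewrite E2.
    assert (E3 : ex_RInt F (r (S b) K) (r (S b) (S K)))
      by (rewrite (grid_r_eq_l_succ b K) by lia; apply HF; lia).
    split; [eapply ex_RInt_Chasles; eauto|].
    rewrite <- (grid_r_eq_l_succ b K) by lia.
    now rewrite <- (RInt_Chasles F 0 (r (S b) K) (r (S b) (S K))) by assumption.
Qed.

Lemma RInt_grid b (F : R -> R) :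
  (forall j, (j < 2 ^ b)%nat -> ex_RInt F (l (S b) j) (r (S b) j)) ->
  sum_first (fun j => RInt F (l (S b) j) (r (S b) j)) (2 ^ b) = RInt F 0 1.
Proof.
  intros HF. pose proof (pow2_pos b).
  destruct (RInt_grid_partial b F (2 ^ b) HF ltac:(lia) ltac:(lia)) as (_ & ->).
  now rewrite grid_r_last.
Qed.

End Grid.

(** * Parseval identity for the coefficients [Delta] *)

(* Refining a cell at its midpoint [m], with [h]-masses [h1] and [h2] of the
   halves, raises the discrete covariance by exactly the product of the two
   coefficients [Delta]; [a, b, c] are the values of [x / g] at [l, m, r] and
   [s] is [sigma]. *)
Lemma split_covariance_identity g h1 h2 a b c a' b' c' : 0 < g -> 0 < h1 -> 0 < h2 ->
  let s := g * sqrt (h1 * h2 / (h1 + h2)) in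
  (b - a) * (b' - a') / h1 + (c - b) * (c' - b') / h2 =
  (c - a) * (c' - a') / (h1 + h2) +
  ((g / s) * b - (s / (g * h1)) * a - (s / (g * h2)) * c) *
  ((g / s) * b' - (s / (g * h1)) * a' - (s / (g * h2)) * c').
Proof.
  intros Hg H1 H2 s.
  set (q := sqrt (h1 * h2 / (h1 + h2))).
  assert (Hq0 : 0 < q) by (apply sqrt_lt_R0, Rdiv_lt_0_compat; nra).
  assert (Hq : q * q = h1 * h2 / (h1 + h2))
    by (apply sqrt_sqrt, Rlt_le, Rdiv_lt_0_compat; nra).
  assert (E1 : g / s = q * (1 / h1 + 1 / h2)).
  { unfold s; fold q. apply Rmult_eq_reg_l with q; [|lra].
    replace (q * (g / (g * q))) with 1 by (field; lra).
    replace (q * (q * (1 / h1 + 1 / h2))) with ((q * q) * (1 / h1 + 1 / h2)) by ring.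
    rewrite Hq. field; lra. }
  assert (E2 : s / (g * h1) = q / h1) by (unfold s; fold q; field; lra).
  assert (E3 : s / (g * h2) = q / h2) by (unfold s; fold q; field; lra).
  rewrite E1, E2, E3.
  replace ((q * (1 / h1 + 1 / h2) * b - q / h1 * a - q / h2 * c) *
           (q * (1 / h1 + 1 / h2) * b' - q / h1 * a' - q / h2 * c'))
    with ((q * q) * ((b - a) / h1 - (c - b) / h2) * ((b' - a') / h1 - (c' - b') / h2))
    by (field; lra).
  rewrite Hq. field; lra.
Qed.

Lemma gfun_pos (gam : R -> R) t : 0 < gfun gam t.
Proof. apply exp_pos. Qed.

Section Parseval.
Variables (beta sG : R -> R) (rho : R) (l m r : nat -> nat -> R).
Hypothesis Hpart : partition rho l m r.
Hypothesis Hhint_pos : forall a b, 0 <= a -> a < b -> b <= 1 -> 0 < hint beta sG a b.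

Definition grid_cov (x y : R -> R) (a j : nat) : R :=
  let X t := x t / gfun beta t in
  let Y t := y t / gfun beta t in
  (X (r a j) - X (l a j)) * (Y (r a j) - Y (l a j)) / hint beta sG (l a j) (r a j).

Lemma Delta_succ b k z : Defs.Delta beta sG l m r (S b) k z =
  (gfun beta (m (S b) k) / Defs.sigma beta sG l m r (S b) k)
    * (z (m (S b) k) / gfun beta (m (S b) k))
  - (Defs.sigma beta sG l m r (S b) k
       / (gfun beta (m (S b) k) * hint beta sG (l (S b) k) (m (S b) k)))
    * (z (l (S b) k) / gfun beta (l (S b) k))
  - (Defs.sigma beta sG l m r (S b) k
       / (gfun beta (m (S b) k) * hint beta sG (m (S b) k) (r (S b) k)))
    * (z (r (S b) k) / gfun beta (r (S b) k)).
Proof. unfold Defs.Delta, Mc, Lc, Rc, Rdiv. simpl Nat.eqb. cbv iota. ring. Qed.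

Lemma grid_cov_refine x y b k : (k < 2 ^ b)%nat ->
  grid_cov x y (S (S b)) (2 * k) + grid_cov x y (S (S b)) (2 * k + 1) =
  grid_cov x y (S b) k + Defs.Delta beta sG l m r (S b) k x * Defs.Delta beta sG l m r (S b) k y.
Proof.
  intros Hk.
  destruct (partition_split rho l m r Hpart b k Hk) as ((Hlm & Hmr) & _ & H1 & H2 & H3 & H4).
  destruct (grid_in_01 rho l m r Hpart b k Hk) as (R1 & R2).
  unfold grid_cov. rewrite H1, H2, H3, H4, !Delta_succ.
  unfold Defs.sigma. simpl Nat.eqb. cbv iota.
  replace (hint beta sG (l (S b) k) (r (S b) k)) with
    (hint beta sG (l (S b) k) (m (S b) k) + hint beta sG (m (S b) k) (r (S b) k))
    by (unfold hint; ring).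
  apply split_covariance_identity; [apply gfun_pos|apply Hhint_pos; lra|apply Hhint_pos; lra].
Qed.

Lemma sumI_Delta_mul x y N : x 0 = 0 -> y 0 = 0 ->
  sumI (fun i j => Defs.Delta beta sG l m r i j x * Defs.Delta beta sG l m r i j y) N =
  sum_first (grid_cov x y (S N)) (2 ^ N).
Proof.
  intros Hx0 Hy0. induction N as [|N IH].
  - unfold sumI, grid_cov, Defs.Delta, Lc, Defs.sigma. simpl Nat.eqb. cbv iota. simpl.
    rewrite (grid_l_0 rho l m r Hpart 0). destruct Hpart as (_ & _ & -> & _).
    rewrite Hx0, Hy0.
    assert (Hh : 0 < hint beta sG 0 1) by (apply Hhint_pos; lra).
    pose proof (sqrt_lt_R0 _ Hh). pose proof (sqrt_sqrt _ (Rlt_le _ _ Hh)) as Hsq.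
    pose proof (gfun_pos beta 1). pose proof (gfun_pos beta 0).
    set (hh := hint beta sG 0 1) in *. set (q := sqrt hh) in *.
    rewrite <- Hsq. field; lra.
  - unfold sumI in *. rewrite tech5, IH.
    unfold level_size. simpl Nat.eqb. cbv iota. replace (S N - 1)%nat with N by lia.
    pose proof (pow2_pos N).
    rewrite sum_f_R0_sum_first. replace (S (2 ^ N - 1)) with (2 ^ N)%nat by lia.
    rewrite pow2_succ, sum_first_pairs, <- sum_first_plus.
    apply sum_first_ext. intros j Hj. now rewrite grid_cov_refine.
Qed.

End Parseval.

(** * Convergence of the discrete covariances *)

Lemma continuous_Rmult (f g : R -> R) x :
  continuous f x -> continuous g x -> continuous (fun t => f t * g t) x.
Proof. intros; now apply (continuous_mult f g). Qed.

Lemma continuous_Rplus (f g : R -> R) x :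
  continuous f x -> continuous g x -> continuous (fun t => f t + g t) x.
Proof. intros; now apply (continuous_plus f g). Qed.

Lemma continuous_Rminus (f g : R -> R) x :
  continuous f x -> continuous g x -> continuous (fun t => f t - g t) x.
Proof. intros; now apply (continuous_minus f g). Qed.

Lemma continuous_Rconst (c x : R) : continuous (fun _ => c) x.
Proof. apply continuous_const. Qed.

Lemma continuous_Rdiv (f g : R -> R) x :
  continuous f x -> continuous g x -> g x <> 0 -> continuous (fun t => f t / g t) x.
Proof.
  intros Hf Hg Hg0. apply continuity_pt_filterlim, continuity_pt_div; auto;
    now apply continuity_pt_filterlim.
Qed.

Lemma continuous_Rsqr (f : R -> R) x : continuous f x -> continuous (fun t => f t ^ 2) x.
Proof.
  intros H. apply (continuous_ext (fun t => f t * f t)); [intros; simpl; ring|].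
  now apply continuous_Rmult.
Qed.

Lemma continuous_Rexp (f : R -> R) x : continuous f x -> continuous (fun t => exp (f t)) x.
Proof. intros. apply (continuous_comp f exp); auto. apply continuous_exp. Qed.

Ltac solve_continuous := intros; repeat match goal with
 | |- continuous (fun t => _ * _) _ => apply continuous_Rmult
 | |- continuous (fun t => _ + _) _ => apply continuous_Rplus
 | |- continuous (fun t => _ - _) _ => apply continuous_Rminus
 | |- continuous (fun t => _ ^ 2) _ => apply continuous_Rsqr
 | |- continuous (fun t => exp _) _ => apply continuous_Rexp
 | |- continuous (fun _ => ?c) _ => apply continuous_Rconst
 | |- continuous (fun t => ?f t) _ => change (continuous f _)
 | H : forall t, continuous ?f t |- continuous ?f _ => apply H
 | H : forall i t, continuous (?V i) t |- continuous (?V _) _ => apply H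
 end.

Lemma ex_RInt_continuous_R (f : R -> R) a b : (forall t, continuous f t) -> ex_RInt f a b.
Proof. intros H; apply (@ex_RInt_continuous R_CompleteNormedModule); intros; apply H. Qed.

Lemma RInt_ext_R (f g : R -> R) a b : (forall t, f t = g t) -> RInt f a b = RInt g a b.
Proof. intros H; apply RInt_ext; intros; apply H. Qed.

Lemma RInt_Rplus (f g : R -> R) a b : ex_RInt f a b -> ex_RInt g a b ->
  RInt (fun t => f t + g t) a b = RInt f a b + RInt g a b.
Proof. intros; now apply (RInt_plus f g). Qed.

Lemma RInt_Rscal c (f : R -> R) a b : ex_RInt f a b ->
  RInt (fun t => c * f t) a b = c * RInt f a b.
Proof. intros; now apply (RInt_scal f a b c). Qed.

Lemma abs_RInt_le_RInt (f g : R -> R) a b : a <= b -> ex_RInt f a b -> ex_RInt g a b ->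
  (forall t, a < t < b -> Rabs (f t) <= g t) -> Rabs (RInt f a b) <= RInt g a b.
Proof.
  intros Hab Hf Hg H. eapply Rle_trans; [apply abs_RInt_le; auto|].
  destruct (Req_dec a b) as [->|Hne]; [rewrite !RInt_point; lra|].
  apply RInt_le; auto. now apply ex_RInt_norm.
Qed.

Lemma RInt_weighted_deviation (w V : R -> R) a b c d : a <= b ->
  (forall t, continuous w t) -> (forall t, continuous V t) -> (forall t, 0 <= w t) ->
  (forall t, a <= t <= b -> Rabs (V t - c) <= d) ->
  Rabs (RInt (fun t => w t * (V t - c)) a b) <= d * RInt w a b.
Proof.
  intros Hab Hw HV Hw0 HVc.
  rewrite <- RInt_Rscal by now apply ex_RInt_continuous_R.
  apply abs_RInt_le_RInt; [exact Hab| | |];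
    [apply ex_RInt_continuous_R; solve_continuous ..|intros t Ht].
  rewrite Rabs_mult, (Rabs_right (w t)) by (apply Rle_ge, Hw0).
  rewrite Rmult_comm. apply Rmult_le_compat_r; [apply Hw0|apply HVc; lra].
Qed.

(* Writing [Vx = cx + ex], [Vy = cy + ey] with [|ex|, |ey| <= d], the
   error equals [(∫ w ex)(∫ w ey) / ∫ w - ∫ w ex ey]. *)
Lemma cell_covariance_error (w Vx Vy : R -> R) a b d : a < b ->
  (forall t, continuous w t) -> (forall t, continuous Vx t) -> (forall t, continuous Vy t) ->
  (forall t, 0 <= w t) ->
  (forall t, a <= t <= b -> Rabs (Vx t - Vx a) <= d) ->
  (forall t, a <= t <= b -> Rabs (Vy t - Vy a) <= d) ->
  0 < RInt w a b ->
  Rabs (RInt (fun t => w t * Vx t) a b * RInt (fun t => w t * Vy t) a b / RInt w a b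
        - RInt (fun t => w t * Vx t * Vy t) a b) <= 2 * d ^ 2 * RInt w a b.
Proof.
  intros Hab Hw HVx HVy Hw0 Bx By HA.
  set (A := RInt w a b). assert (HA' : 0 < A) by exact HA. clear HA.
  set (cx := Vx a). set (cy := Vy a).
  set (Ex := RInt (fun t => w t * (Vx t - cx)) a b).
  set (Ey := RInt (fun t => w t * (Vy t - cy)) a b).
  set (Exy := RInt (fun t => w t * ((Vx t - cx) * (Vy t - cy) - 0)) a b).
  assert (Hint : forall F : R -> R, (forall t, continuous F t) -> ex_RInt F a b)
    by (intros; now apply ex_RInt_continuous_R).
  assert (Ix : RInt (fun t => w t * Vx t) a b = cx * A + Ex).
  { unfold Ex, A. rewrite <- RInt_Rscal, <- RInt_Rplus by (apply Hint; solve_continuous).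
    apply RInt_ext_R; intros; ring. }
  assert (Iy : RInt (fun t => w t * Vy t) a b = cy * A + Ey).
  { unfold Ey, A. rewrite <- RInt_Rscal, <- RInt_Rplus by (apply Hint; solve_continuous).
    apply RInt_ext_R; intros; ring. }
  assert (Ixy : RInt (fun t => w t * Vx t * Vy t) a b = cx * cy * A + cx * Ey + cy * Ex + Exy).
  { unfold Ex, Ey, Exy, A.
    rewrite <- !RInt_Rscal, <- !RInt_Rplus; try (apply Hint; solve_continuous).
    apply RInt_ext_R; intros; ring. }
  assert (Hd : 0 <= d) by (specialize (Bx a ltac:(lra)); pose proof (Rabs_pos (Vx a - Vx a)); lra).
  assert (BEx : Rabs Ex <= d * A) by (apply RInt_weighted_deviation; auto; lra).
  assert (BEy : Rabs Ey <= d * A) by (apply RInt_weighted_deviation; auto; lra).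
  assert (BExy : Rabs Exy <= d ^ 2 * A).
  { apply RInt_weighted_deviation; [lra|exact Hw|solve_continuous|exact Hw0|].
    intros t Ht. rewrite Rminus_0_r, Rabs_mult. simpl; rewrite Rmult_1_r.
    apply Rmult_le_compat; auto using Rabs_pos. }
  rewrite Ix, Iy, Ixy.
  replace ((cx * A + Ex) * (cy * A + Ey) / A - (cx * cy * A + cx * Ey + cy * Ex + Exy))
    with (Ex * Ey / A - Exy) by (field; lra).
  assert (Rabs (Ex * Ey / A) <= d ^ 2 * A).
  { unfold Rdiv. rewrite !Rabs_mult, Rabs_inv, (Rabs_right A) by lra.
    apply Rmult_le_reg_r with A; auto.
    replace (Rabs Ex * Rabs Ey * / A * A) with (Rabs Ex * Rabs Ey) by (field; lra).
    replace (d ^ 2 * A * A) with ((d * A) * (d * A)) by ring.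
    apply Rmult_le_compat; auto using Rabs_pos. }
  unfold Rminus. eapply Rle_trans; [apply Rabs_triang|]. rewrite Rabs_Ropp. lra.
Qed.

Lemma uniform_continuity_family (V : nat -> R -> R) K : (forall i t, continuous (V i) t) ->
  forall d, 0 < d -> exists e, 0 < e /\ forall i, (i < K)%nat ->
    forall s t, 0 <= s <= 1 -> 0 <= t <= 1 -> Rabs (s - t) < e -> Rabs (V i s - V i t) < d.
Proof.
  intros HV d Hd. induction K as [|K IH].
  - exists 1. split; [lra|]. intros; lia.
  - destruct IH as (e1 & He1 & H1).
    assert (Hc : forall x, 0 <= x <= 1 -> continuity_pt (V K) x)
      by (intros x _; apply continuity_pt_filterlim, HV).
    destruct (Heine_cor2 Hc (mkposreal d Hd)) as ((e2 & He2) & H2). simpl in H2.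
    exists (Rmin e1 e2). split; [now apply Rmin_pos|].
    pose proof (Rmin_l e1 e2). pose proof (Rmin_r e1 e2).
    intros i Hi s t Hs Ht Hst. destruct (Nat.eq_dec i K) as [->|Hne].
    + apply H2; auto; lra.
    + apply H1; auto; lia || lra.
Qed.

Lemma quadratic_error_small (A eps : R) : 0 < A -> 0 < eps ->
  exists d, 0 < d /\ 2 * d ^ 2 * A < eps.
Proof.
  intros HA He. set (d := Rmin (1 / 2) (eps / (2 * A + 2))).
  assert (Hd1 : d <= 1 / 2) by apply Rmin_l.
  assert (Hd2 : d <= eps / (2 * A + 2)) by apply Rmin_r.
  assert (Hd : 0 < d) by (apply Rmin_pos; [lra|apply Rdiv_lt_0_compat; lra]).
  exists d. split; [exact Hd|].
  assert (d * (2 * A + 2) <= eps) by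
    (apply (Rmult_le_compat_r (2 * A + 2)) in Hd2; [|lra];
     unfold Rdiv in Hd2; rewrite Rmult_assoc, Rinv_l, Rmult_1_r in Hd2; lra).
  nra.
Qed.

Section Covariance_limit.
Variables (rho : R) (l m r : nat -> nat -> R).
Hypothesis Hpart : partition rho l m r.

Variables (f X Y ux uy : R -> R) (Vx Vy : nat -> R -> R) (K N0 : nat).
Hypothesis Hf : forall t, continuous f t.
Hypothesis Hf_pos : forall t, 0 < f t.
Hypothesis HVx : forall i t, continuous (Vx i) t.
Hypothesis HVy : forall i t, continuous (Vy i) t.
Hypothesis HX : forall N j, (N0 <= N)%nat -> (j < 2 ^ N)%nat -> exists i, (i < K)%nat /\
  X (r (S N) j) - X (l (S N) j) = RInt (fun t => f t ^ 2 * Vx i t) (l (S N) j) (r (S N) j) /\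
  forall t, l (S N) j < t < r (S N) j -> ux t = f t * Vx i t.
Hypothesis HY : forall N j, (N0 <= N)%nat -> (j < 2 ^ N)%nat -> exists i, (i < K)%nat /\
  Y (r (S N) j) - Y (l (S N) j) = RInt (fun t => f t ^ 2 * Vy i t) (l (S N) j) (r (S N) j) /\
  forall t, l (S N) j < t < r (S N) j -> uy t = f t * Vy i t.

Lemma RInt_fsqr_pos a b : a < b -> 0 < RInt (fun t => f t ^ 2) a b.
Proof.
  intros Hab. apply RInt_gt_0; auto.
  - intros t _. apply pow_lt, Hf_pos.
  - intros; now apply continuous_Rsqr.
Qed.

Lemma RInt_grid_ux_uy N : (N0 <= N)%nat ->
  sum_first (fun j => RInt (fun t => ux t * uy t) (l (S N) j) (r (S N) j)) (2 ^ N) =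
  RInt (fun t => ux t * uy t) 0 1.
Proof.
  intros HN. apply (RInt_grid rho l m r Hpart). intros j Hj.
  destruct (HX N j HN Hj) as (ix & _ & _ & Ux). destruct (HY N j HN Hj) as (iy & _ & _ & Uy).
  pose proof (grid_l_lt_r rho l m r Hpart N j Hj).
  apply (ex_RInt_ext (fun t => f t ^ 2 * Vx ix t * Vy iy t)).
  - intros t Ht. rewrite Rmin_left, Rmax_right in Ht by lra. rewrite Ux, Uy by lra. simpl; ring.
  - apply ex_RInt_continuous_R. solve_continuous.
Qed.

Theorem grid_covariance_cvg :
  is_lim_seq (fun N => sum_first (fun j =>
      (X (r (S N) j) - X (l (S N) j)) * (Y (r (S N) j) - Y (l (S N) j)) /
      RInt (fun t => f t ^ 2) (l (S N) j) (r (S N) j)) (2 ^ N))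
    (RInt (fun t => ux t * uy t) 0 1).
Proof.
  apply is_lim_seq_spec. intros eps.
  set (A := RInt (fun t => f t ^ 2) 0 1).
  destruct (quadratic_error_small A eps (RInt_fsqr_pos 0 1 Rlt_0_1) (cond_pos eps))
    as (d & Hd & Hdeps).
  destruct (uniform_continuity_family Vx K HVx d Hd) as (e1 & He1 & U1).
  destruct (uniform_continuity_family Vy K HVy d Hd) as (e2 & He2 & U2).
  assert (Hrho : 0 < rho < 1) by now destruct Hpart.
  destruct (pow_lt_1_zero rho ltac:(rewrite Rabs_right; lra) (Rmin e1 e2)
              ltac:(now apply Rmin_pos)) as (N1 & HN1).
  exists (max N0 N1). intros N HN.
  rewrite <- (RInt_grid_ux_uy N), <- sum_first_minus by lia.
  eapply Rle_lt_trans; [apply sum_first_abs|].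
  eapply Rle_lt_trans; [apply sum_first_le with
    (g := fun j => 2 * d ^ 2 * RInt (fun t => f t ^ 2) (l (S N) j) (r (S N) j))|].
  - intros j Hj.
    destruct (grid_in_01 rho l m r Hpart N j Hj) as (R1 & R2).
    pose proof (grid_l_lt_r rho l m r Hpart N j Hj) as R3.
    pose proof (grid_mesh rho l m r Hpart N j Hj) as R4.
    specialize (HN1 N ltac:(lia)). rewrite Rabs_right in HN1 by (apply Rle_ge, pow_le; lra).
    pose proof (Rmin_l e1 e2). pose proof (Rmin_r e1 e2).
    destruct (HX N j ltac:(lia) Hj) as (ix & Hix & -> & Ux).
    destruct (HY N j ltac:(lia) Hj) as (iy & Hiy & -> & Uy).
    rewrite (RInt_ext (fun t => ux t * uy t) (fun t => f t ^ 2 * Vx ix t * Vy iy t)).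
    2:{ intros t Ht. rewrite Rmin_left, Rmax_right in Ht by lra.
        rewrite Ux, Uy by lra. simpl; ring. }
    apply (cell_covariance_error (fun t => f t ^ 2)).
    + exact R3.
    + solve_continuous.
    + apply HVx.
    + apply HVy.
    + intros t. apply pow2_ge_0.
    + intros t Ht. apply Rlt_le, U1; [exact Hix|lra|lra|rewrite Rabs_right; lra].
    + intros t Ht. apply Rlt_le, U2; [exact Hiy|lra|lra|rewrite Rabs_right; lra].
    + now apply RInt_fsqr_pos.
  - rewrite sum_first_scal, (RInt_grid rho l m r Hpart); [exact Hdeps|].
    intros j Hj. apply ex_RInt_continuous_R. solve_continuous.
Qed.

End Covariance_limit.

(** * Continuous extensions to the whole line *)

(* Coquelicot's continuity and derivatives are global notions, so the
   coefficients are extended to [R] by clamping the argument to [[0, 1]];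
   everything agrees with the original objects on [[0, 1]]. *)
Definition clamp01 (t : R) : R := Rmin 1 (Rmax 0 t).

Lemma clamp01_id t : 0 <= t <= 1 -> clamp01 t = t.
Proof. intros H. unfold clamp01, Rmin, Rmax. repeat destruct Rle_dec; lra. Qed.

Lemma clamp01_in_01 t : 0 <= clamp01 t <= 1.
Proof. unfold clamp01, Rmin, Rmax. repeat destruct Rle_dec; lra. Qed.

Lemma clamp01_lipschitz s t : Rabs (clamp01 s - clamp01 t) <= Rabs (s - t).
Proof.
  unfold clamp01, Rmin, Rmax, Rabs. repeat destruct Rle_dec; repeat destruct Rcase_abs; lra.
Qed.

Definition clamped (f : R -> R) (t : R) : R := f (clamp01 t).

Lemma holder01_continuous_clamped f : holder01 f -> forall t, continuous (clamped f) t.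
Proof.
  intros (C & a & Ha & H) t. apply continuity_pt_filterlim.
  intros eps Heps. simpl.
  assert (HC : 0 < Rabs C + 1) by (pose proof (Rabs_pos C); lra).
  set (dl := Rpower (eps / (Rabs C + 1)) (1 / a)).
  exists dl. split; [apply exp_pos|].
  intros x (_ & Hx). unfold R_dist, clamped in *.
  pose proof (clamp01_lipschitz x t).
  destruct (Req_dec (clamp01 x) (clamp01 t)) as [E|NE].
  { rewrite E, Rminus_diag, Rabs_R0; lra. }
  set (u := Rabs (clamp01 x - clamp01 t)) in *.
  assert (Hu : 0 < u) by (apply Rabs_pos_lt; lra).
  assert (Hua : Rpower u a < eps / (Rabs C + 1)).
  { replace (eps / (Rabs C + 1)) with (Rpower dl a).
    - apply Rlt_Rpower_l; [lra|split; lra].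
    - unfold dl. rewrite Rpower_mult. replace (1 / a * a) with 1 by (field; lra).
      apply Rpower_1, Rdiv_lt_0_compat; lra. }
  assert (Hpow : 0 < Rpower u a) by apply exp_pos.
  eapply Rle_lt_trans; [apply H; apply clamp01_in_01|].
  apply Rle_lt_trans with (Rabs C * Rpower u a);
    [apply Rmult_le_compat_r; [lra|apply Rle_abs]|].
  apply Rle_lt_trans with (Rabs C * (eps / (Rabs C + 1)));
    [apply Rmult_le_compat_l; [apply Rabs_pos|lra]|].
  apply Rmult_lt_reg_r with (Rabs C + 1); [exact HC|].
  replace (Rabs C * (eps / (Rabs C + 1)) * (Rabs C + 1)) with (Rabs C * eps) by (field; lra).
  nra.
Qed.

Section Extension.
Variables (gam sG : R -> R).
Hypothesis Hgam : holder01 gam.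
Hypothesis HsG : holder01 sG.
Hypothesis HsG_pos : forall t, 0 <= t <= 1 -> 0 < sG t.

Definition Gam_ext (t : R) : R := RInt (clamped gam) 0 t.
Definition f_ext (t : R) : R := clamped sG t * exp (- Gam_ext t).
Definition h_ext (t : R) : R := RInt (fun s => f_ext s ^ 2) 0 t.

Lemma Gam_ext_derive t : is_derive Gam_ext t (clamped gam t).
Proof.
  apply (is_derive_RInt (clamped gam) Gam_ext 0 t).
  - apply filter_forall. intros b. apply (@RInt_correct R_CompleteNormedModule).
    apply ex_RInt_continuous_R, holder01_continuous_clamped, Hgam.
  - now apply holder01_continuous_clamped.
Qed.

Lemma Gam_ext_continuous t : continuous Gam_ext t.
Proof.
  apply (@ex_derive_continuous R_AbsRing R_NormedModule). eexists; apply Gam_ext_derive.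
Qed.

Lemma f_ext_continuous t : continuous f_ext t.
Proof.
  apply continuous_Rmult; [now apply holder01_continuous_clamped|].
  apply continuous_Rexp, (continuous_opp Gam_ext), Gam_ext_continuous.
Qed.

Lemma f_ext_pos t : 0 < f_ext t.
Proof. apply Rmult_lt_0_compat; [apply HsG_pos, clamp01_in_01|apply exp_pos]. Qed.

Lemma h_ext_derive t : is_derive h_ext t (f_ext t ^ 2).
Proof.
  apply (is_derive_RInt (fun s => f_ext s ^ 2) h_ext 0 t).
  - apply filter_forall. intros b. apply (@RInt_correct R_CompleteNormedModule).
    apply ex_RInt_continuous_R. solve_continuous. apply f_ext_continuous.
  - apply continuous_Rsqr, f_ext_continuous.
Qed.

Lemma RInt_gam_eq t : 0 <= t <= 1 -> RInt gam 0 t = Gam_ext t.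
Proof.
  intros Ht. apply RInt_ext. intros x Hx. rewrite Rmin_left, Rmax_right in Hx by lra.
  unfold clamped. rewrite clamp01_id; [reflexivity|lra].
Qed.

Lemma gfun_eq t : 0 <= t <= 1 -> gfun gam t = exp (Gam_ext t).
Proof. intros; unfold gfun; now rewrite RInt_gam_eq. Qed.

Lemma ffun_eq t : 0 <= t <= 1 -> ffun gam sG t = f_ext t.
Proof. intros; unfold ffun, f_ext, clamped; now rewrite RInt_gam_eq, clamp01_id. Qed.

Lemma hint_eq a b : 0 <= a <= 1 -> 0 <= b <= 1 -> hint gam sG a b = h_ext b - h_ext a.
Proof.
  assert (Hh : forall t, 0 <= t <= 1 -> hfun gam sG t = h_ext t).
  { intros t Ht. apply RInt_ext. intros x Hx.
    rewrite Rmin_left, Rmax_right in Hx by lra. rewrite ffun_eq; [reflexivity|lra]. }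
  intros; unfold hint; now rewrite !Hh.
Qed.

Lemma hint_RInt a b : 0 <= a <= 1 -> 0 <= b <= 1 ->
  hint gam sG a b = RInt (fun s => f_ext s ^ 2) a b.
Proof.
  intros Ha Hb. rewrite hint_eq by assumption. unfold h_ext.
  assert (Hint : forall x y, ex_RInt (fun s => f_ext s ^ 2) x y)
    by (intros; apply ex_RInt_continuous_R; solve_continuous; apply f_ext_continuous).
  rewrite <- (RInt_Chasles (fun s => f_ext s ^ 2) 0 a b) by apply Hint.
  change (plus ?x ?y) with (x + y). ring.
Qed.

Lemma hint_pos a b : 0 <= a -> a < b -> b <= 1 -> 0 < hint gam sG a b.
Proof.
  intros. rewrite hint_RInt by lra. apply RInt_gt_0; auto.
  - intros x _. apply pow_lt, f_ext_pos.
  - intros; apply continuous_Rsqr, f_ext_continuous.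
Qed.

End Extension.

(** * Pieces of [psi] *)

Section Pieces.
Variables (alpha beta sG : R -> R).
Hypothesis Halpha : holder01 alpha.
Hypothesis Hbeta : holder01 beta.
Hypothesis HsG : holder01 sG.
Hypothesis HsG_pos : forall t, 0 <= t <= 1 -> 0 < sG t.

Definition g_ratio (t : R) : R := exp (Gam_ext alpha t - Gam_ext beta t).

(* For a piece [psi = g_alpha H] with [H' = Hd], [piece_density H Hd] is the
   [V] with [(psi / g_beta)' = f_beta^2 V]. *)
Definition piece_density (H Hd : R -> R) (t : R) : R :=
  ((clamped alpha t - clamped beta t) * g_ratio t * H t + g_ratio t * Hd t)
  / f_ext beta sG t ^ 2.

Lemma g_ratio_eq t : 0 <= t <= 1 -> g_ratio t = gfun alpha t / gfun beta t.
Proof.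
  intros. rewrite !gfun_eq by assumption.
  unfold g_ratio, Rminus. now rewrite exp_plus, exp_Ropp.
Qed.

Lemma g_ratio_continuous t : continuous g_ratio t.
Proof.
  apply continuous_Rexp, continuous_Rminus; apply Gam_ext_continuous; assumption.
Qed.

Lemma g_ratio_derive t : is_derive g_ratio t ((clamped alpha t - clamped beta t) * g_ratio t).
Proof.
  apply (is_derive_comp exp (fun s => Gam_ext alpha s - Gam_ext beta s)); [apply is_derive_exp|].
  apply (is_derive_minus (Gam_ext alpha) (Gam_ext beta)); now apply Gam_ext_derive.
Qed.

Lemma piece_density_continuous H Hd t :
  (forall s, is_derive H s (Hd s)) -> (forall s, continuous Hd s) ->
  continuous (piece_density H Hd) t.
Proof.
  intros HH HHd.
  assert (CH : forall s, continuous H s)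
    by (intros s; apply (@ex_derive_continuous R_AbsRing R_NormedModule); eexists; apply HH).
  assert (Ca : forall s, continuous (clamped alpha) s) by now apply holder01_continuous_clamped.
  assert (Cb : forall s, continuous (clamped beta) s) by now apply holder01_continuous_clamped.
  assert (Cf : forall s, continuous (f_ext beta sG) s) by now apply f_ext_continuous.
  apply continuous_Rdiv; [solve_continuous; apply g_ratio_continuous|solve_continuous|].
  apply Rgt_not_eq, pow_lt, f_ext_pos, HsG_pos.
Qed.

Section Piece.
Variables (ps H Hd : R -> R) (a b : R).
Hypothesis HH : forall s, is_derive H s (Hd s).
Hypothesis HHd : forall s, continuous Hd s.
Hypothesis Hab : 0 <= a < b /\ b <= 1.
Hypothesis Hps : forall s, a <= s <= b -> ps s = gfun alpha s * H s.

Lemma piece_increment :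
  ps b / gfun beta b - ps a / gfun beta a =
  RInt (fun t => f_ext beta sG t ^ 2 * piece_density H Hd t) a b.
Proof.
  assert (CH : forall s, continuous H s)
    by (intros s; apply (@ex_derive_continuous R_AbsRing R_NormedModule); eexists; apply HH).
  assert (Xe : forall s, a <= s <= b -> ps s / gfun beta s = g_ratio s * H s).
  { intros s Hs. rewrite Hps, g_ratio_eq by (auto; lra).
    pose proof (gfun_pos beta s). field; lra. }
  rewrite !Xe by lra.
  rewrite (RInt_ext_R _
    (fun t => (clamped alpha t - clamped beta t) * g_ratio t * H t + g_ratio t * Hd t)).
  2:{ intros t. unfold piece_density. pose proof (f_ext_pos beta sG HsG_pos t).
      field. apply Rgt_not_eq; lra. }
  symmetry. apply is_RInt_unique.
  apply (@is_RInt_derive R_CompleteNormedModule (fun s => g_ratio s * H s)).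
  - intros x _. apply (is_derive_mult g_ratio H x _ _ (g_ratio_derive x) (HH x) Rmult_comm).
  - intros x _. apply continuous_Rplus;
      repeat apply continuous_Rmult; auto using g_ratio_continuous.
    apply continuous_Rminus; now apply holder01_continuous_clamped.
Qed.

Lemma piece_integrand t : a < t < b ->
  / ffun alpha sG t * Derive (fun s => ps s / gfun alpha s) t + (alpha t - beta t) / sG t * ps t
  = f_ext beta sG t * piece_density H Hd t.
Proof.
  intros Ht. assert (T01 : 0 <= t <= 1) by lra.
  assert (Loc : locally t (fun s => ps s / gfun alpha s = H s)).
  { apply (locally_interval _ t a b); simpl; try lra.
    intros y Hy1 Hy2. rewrite Hps by lra. pose proof (gfun_pos alpha y). field; lra. }
  replace (Derive (fun s => ps s / gfun alpha s) t) with (Hd t)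
    by (rewrite <- (is_derive_unique H t (Hd t) (HH t)); symmetry; now apply Derive_ext_loc).
  rewrite Hps by lra.
  unfold piece_density.
  rewrite (ffun_eq alpha sG t T01), (g_ratio_eq t T01), !gfun_eq by assumption.
  unfold f_ext, clamped. rewrite !clamp01_id, !exp_Ropp by assumption.
  pose proof (exp_pos (Gam_ext alpha t)). pose proof (exp_pos (Gam_ext beta t)).
  pose proof (HsG_pos t T01).
  field. repeat split; lra.
Qed.

End Piece.
End Pieces.

Section Limit.
Variables (alpha beta sG : R -> R) (rho : R) (l m r : nat -> nat -> R).
Hypothesis Halpha : holder01 alpha.
Hypothesis Hbeta : holder01 beta.
Hypothesis HsG : holder01 sG.
Hypothesis HsG_pos : forall t, 0 <= t <= 1 -> 0 < sG t.
Hypothesis Hpart : partition rho l m r.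

Definition affine_h (L p c s : R) : R := L * (p * h_ext alpha sG s + c).
Definition affine_dh (L p s : R) : R := L * (p * f_ext alpha sG s ^ 2).

Lemma affine_h_derive L p c s : is_derive (affine_h L p c) s (affine_dh L p s).
Proof.
  unfold affine_h, affine_dh. apply (is_derive_scal (fun s => p * h_ext alpha sG s + c)).
  pose proof (is_derive_plus (fun s => p * h_ext alpha sG s) (fun _ => c) s _ _
     (is_derive_scal _ s p _ (h_ext_derive alpha sG Halpha HsG s)) (is_derive_const c s)) as D.
  now rewrite plus_zero_r in D.
Qed.

Lemma affine_dh_continuous L p s : continuous (affine_dh L p) s.
Proof.
  assert (Cf : forall s, continuous (f_ext alpha sG) s) by now apply f_ext_continuous.
  unfold affine_dh. solve_continuous.
Qed.

(* On a fine cell, [psi n k / g_alpha] is the left ramp [Lc h(l, .)] (i = 0,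
   also used at level 0), the right ramp [Rc h(., r)] (i = 1) or zero. *)
Definition psi_piece_coef (n k i : nat) : R * R * R :=
  if Nat.eqb n 0 then (Lc alpha sG l m r n k, 1, - h_ext alpha sG 0)
  else match i with
       | O => (Lc alpha sG l m r n k, 1, - h_ext alpha sG (l n k))
       | S O => (Rc alpha sG l m r n k, -1, h_ext alpha sG (r n k))
       | _ => (0, 0, 0)
       end.

Definition psi_piece n k i := let '(L, p, c) := psi_piece_coef n k i in affine_h L p c.
Definition psi_piece_deriv n k i := let '(L, p, _) := psi_piece_coef n k i in affine_dh L p.

Lemma psi_piece_derive n k i s : is_derive (psi_piece n k i) s (psi_piece_deriv n k i s).
Proof.
  unfold psi_piece, psi_piece_deriv. destruct (psi_piece_coef n k i) as ((L, p), c).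
  apply affine_h_derive.
Qed.

Lemma psi_piece_deriv_continuous n k i s : continuous (psi_piece_deriv n k i) s.
Proof.
  unfold psi_piece_deriv. destruct (psi_piece_coef n k i) as ((L, p), c).
  apply affine_dh_continuous.
Qed.

(* Continuity of [psi] at the midpoint. *)
Lemma Lc_hint_eq_Rc_hint b k : (k < 2 ^ b)%nat ->
  Lc alpha sG l m r (S b) k * hint alpha sG (l (S b) k) (m (S b) k) =
  Rc alpha sG l m r (S b) k * hint alpha sG (m (S b) k) (r (S b) k).
Proof.
  intros Hk.
  destruct (partition_split rho l m r Hpart b k Hk) as ((Hlm & Hmr) & _).
  destruct (grid_in_01 rho l m r Hpart b k Hk) as (R1 & R2).
  pose proof (hint_pos alpha sG Halpha HsG HsG_pos (l (S b) k) (m (S b) k) R1 Hlm ltac:(lra)).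
  pose proof (hint_pos alpha sG Halpha HsG HsG_pos (m (S b) k) (r (S b) k) ltac:(lra) Hmr R2).
  pose proof (gfun_pos alpha (m (S b) k)).
  unfold Lc, Rc. simpl Nat.eqb. cbv iota. field. repeat split; lra.
Qed.

Lemma psi_succ_piecewise b k N j : (k < 2 ^ b)%nat -> (S b <= N)%nat -> (j < 2 ^ N)%nat ->
  exists i, (i < 3)%nat /\ forall s, l (S N) j <= s <= r (S N) j ->
    psi alpha sG l m r (S b) k s = gfun alpha s * psi_piece (S b) k i s.
Proof.
  intros Hk HN Hj.
  destruct (partition_split rho l m r Hpart b k Hk) as ((Hlm & Hmr) & _).
  destruct (grid_in_01 rho l m r Hpart b k Hk) as (R1 & R2).
  destruct (grid_in_01 rho l m r Hpart N j Hj) as (R3 & R4).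
  pose proof (grid_l_lt_r rho l m r Hpart N j Hj).
  pose proof (Lc_hint_eq_Rc_hint b k Hk) as Emid.
  destruct (grid_position rho l m r Hpart b k N j Hk HN Hj) as [C|[C|[C|C]]].
  - exists 2%nat. split; [lia|]. intros s Hs.
    cbn [psi psi_piece psi_piece_coef Nat.eqb]. unfold affine_h.
    destruct (Rle_dec (l (S b) k) s); [|ring]. destruct (Rle_dec s (m (S b) k)); [|lra].
    replace s with (l (S b) k) by lra. unfold hint. ring.
  - exists 2%nat. split; [lia|]. intros s Hs.
    cbn [psi psi_piece psi_piece_coef Nat.eqb]. unfold affine_h.
    destruct (Rle_dec (l (S b) k) s); [|lra]. destruct (Rle_dec s (m (S b) k)); [lra|].
    destruct (Rle_dec s (r (S b) k)); [|ring].
    replace s with (r (S b) k) by lra. unfold hint. ring.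
  - exists 0%nat. split; [lia|]. intros s Hs.
    cbn [psi psi_piece psi_piece_coef Nat.eqb]. unfold affine_h.
    destruct (Rle_dec (l (S b) k) s); [|lra]. destruct (Rle_dec s (m (S b) k)); [|lra].
    rewrite hint_eq by (assumption || lra). ring.
  - exists 1%nat. split; [lia|]. intros s Hs.
    cbn [psi psi_piece psi_piece_coef Nat.eqb]. unfold affine_h.
    destruct (Rle_dec (l (S b) k) s); [|lra]. destruct (Rle_dec s (m (S b) k)).
    + replace s with (m (S b) k) in * by lra.
      rewrite Rmult_assoc, (Rmult_comm (hint _ _ _ _)), Emid, hint_eq by (assumption || lra).
      ring.
    + destruct (Rle_dec s (r (S b) k)); [|lra].
      rewrite hint_eq by (assumption || lra). ring.
Qed.

Lemma psi_piecewise n k : inI n k -> exists N0, forall N j, (N0 <= N)%nat -> (j < 2 ^ N)%nat ->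
  exists i, (i < 3)%nat /\ forall s, l (S N) j <= s <= r (S N) j ->
    psi alpha sG l m r n k s = gfun alpha s * psi_piece n k i s.
Proof.
  intros [(-> & ->) | (Hn & Hk)].
  - exists 0%nat. intros N j _ Hj. exists 0%nat. split; [lia|]. intros s Hs.
    destruct (grid_in_01 rho l m r Hpart N j Hj).
    cbn [psi psi_piece psi_piece_coef Nat.eqb]. unfold affine_h.
    rewrite hint_eq by (assumption || lra). ring.
  - destruct n as [|b]; [lia|]. replace (S b - 1)%nat with b in Hk by lia.
    exists (S b). intros N j HN Hj. now apply psi_succ_piecewise.
Qed.

Lemma psi_at_0 n k : inI n k -> psi alpha sG l m r n k 0 = 0.
Proof.
  intros [(-> & ->) | (Hn & Hk)].
  - unfold psi, hint. simpl Nat.eqb. cbv iota. ring.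
  - destruct n as [|b]; [lia|]. replace (S b - 1)%nat with b in Hk by lia.
    destruct (grid_in_01 rho l m r Hpart b k Hk) as (R1 & R2).
    destruct (partition_split rho l m r Hpart b k Hk) as ((Hlm & Hmr) & _).
    unfold psi. simpl Nat.eqb. cbv iota.
    destruct (Rle_dec (l (S b) k) 0); [|reflexivity]. destruct (Rle_dec 0 (m (S b) k)); [|lra].
    replace (l (S b) k) with 0 by lra. unfold hint. ring.
Qed.

Let u n k t :=
  phi alpha sG l m r n k t + (alpha t - beta t) / sG t * psi alpha sG l m r n k t.

Lemma psi_cells n k : inI n k -> exists N0, forall N j, (N0 <= N)%nat -> (j < 2 ^ N)%nat ->
  exists i, (i < 3)%nat /\
  psi alpha sG l m r n k (r (S N) j) / gfun beta (r (S N) j)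
    - psi alpha sG l m r n k (l (S N) j) / gfun beta (l (S N) j) =
    RInt (fun t => f_ext beta sG t ^ 2 *
      piece_density alpha beta sG (psi_piece n k i) (psi_piece_deriv n k i) t)
      (l (S N) j) (r (S N) j) /\
  forall t, l (S N) j < t < r (S N) j -> u n k t = f_ext beta sG t *
      piece_density alpha beta sG (psi_piece n k i) (psi_piece_deriv n k i) t.
Proof.
  intros Hnk. destruct (psi_piecewise n k Hnk) as (N0 & HN0). exists N0.
  intros N j HN Hj. destruct (HN0 N j HN Hj) as (i & Hi & Hpsi). exists i.
  destruct (grid_in_01 rho l m r Hpart N j Hj).
  pose proof (grid_l_lt_r rho l m r Hpart N j Hj).
  split; [|split].
  - exact Hi.
  - apply piece_increment; auto using psi_piece_derive, psi_piece_deriv_continuous.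
  - intros t Ht. apply piece_integrand with (a := l (S N) j) (b := r (S N) j);
      auto using psi_piece_derive, psi_piece_deriv_continuous.
Qed.

Theorem sumI_Gmat_cvg n k p q : inI n k -> inI p q ->
  is_lim_seq (sumI (fun i j => Gmat alpha beta sG l m r i j n k * Gmat alpha beta sG l m r i j p q))
    (RInt (fun t => u n k t * u p q t) 0 1).
Proof.
  intros Hnk Hpq.
  destruct (psi_cells n k Hnk) as (N1 & C1). destruct (psi_cells p q Hpq) as (N2 & C2).
  eapply is_lim_seq_ext.
  2:{ apply (grid_covariance_cvg rho l m r Hpart (f_ext beta sG)
        (fun t => psi alpha sG l m r n k t / gfun beta t)
        (fun t => psi alpha sG l m r p q t / gfun beta t) (u n k) (u p q)
        (fun i => piece_density alpha beta sG (psi_piece n k i) (psi_piece_deriv n k i))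
        (fun i => piece_density alpha beta sG (psi_piece p q i) (psi_piece_deriv p q i))
        3 (max N1 N2)).
      - intros; now apply f_ext_continuous.
      - intros; now apply f_ext_pos.
      - intros i t. apply piece_density_continuous;
          auto using psi_piece_derive, psi_piece_deriv_continuous.
      - intros i t. apply piece_density_continuous;
          auto using psi_piece_derive, psi_piece_deriv_continuous.
      - intros N j HN Hj. apply C1; [lia|exact Hj].
      - intros N j HN Hj. apply C2; [lia|exact Hj]. }
  intros N. unfold Gmat.
  rewrite (sumI_Delta_mul beta sG rho l m r Hpart (hint_pos beta sG Hbeta HsG HsG_pos))
    by now apply psi_at_0.
  apply sum_first_ext. intros j Hj. unfold grid_cov.
  destruct (grid_in_01 rho l m r Hpart N j Hj).
  pose proof (grid_l_lt_r rho l m r Hpart N j Hj).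
  rewrite (hint_RInt beta sG Hbeta HsG) by lra. reflexivity.
Qed.

End Limit.

Lemma sumI_incr (G : nat -> nat -> R) :
  (forall i j, 0 <= G i j) -> forall N, sumI G N <= sumI G (S N).
Proof.
  intros H N. unfold sumI. rewrite tech5.
  pose proof (cond_pos_sum (fun j => G (S N) j) (level_size (S N) - 1) (fun n => H _ n)). lra.
Qed.

Lemma sum_f_R0_le_mean (A B C : nat -> R) N : (forall n, A n <= (B n + C n) / 2) ->
  sum_f_R0 A N <= (sum_f_R0 B N + sum_f_R0 C N) / 2.
Proof. intros H. induction N; simpl; [apply H|]. pose proof (H (S N)). lra. Qed.

Lemma Rabs_mult_le_mean a b : Rabs (a * b) <= (a * a + b * b) / 2.
Proof.
  rewrite Rabs_mult.
  assert (Ea : Rabs a * Rabs a = a * a)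
    by (rewrite <- Rabs_mult; apply Rabs_right, Rle_ge, Rle_0_sqr).
  assert (Eb : Rabs b * Rabs b = b * b)
    by (rewrite <- Rabs_mult; apply Rabs_right, Rle_ge, Rle_0_sqr).
  pose proof (Rle_0_sqr (Rabs a - Rabs b)). unfold Rsqr in *. nra.
Qed.

(* The partial sums of [|a b|] increase and, by [|a b| <= (a^2 + b^2) / 2],
   stay below the mean of the two limits. *)
Lemma sumI_abs_mul_ex_lim (a b : nat -> nat -> R) (La Lb : R) :
  is_lim_seq (sumI (fun i j => a i j * a i j)) La ->
  is_lim_seq (sumI (fun i j => b i j * b i j)) Lb ->
  ex_finite_lim_seq (sumI (fun i j => Rabs (a i j * b i j))).
Proof.
  intros Ha Hb. apply ex_finite_lim_seq_incr with (M := (La + Lb) / 2).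
  - apply sumI_incr. intros; apply Rabs_pos.
  - intros N.
    pose proof (is_lim_seq_incr_compare _ _ Ha (sumI_incr _ (fun i j => Rle_0_sqr _)) N).
    pose proof (is_lim_seq_incr_compare _ _ Hb (sumI_incr _ (fun i j => Rle_0_sqr _)) N).
    apply Rle_trans with
      ((sumI (fun i j => a i j * a i j) N + sumI (fun i j => b i j * b i j) N) / 2); [|lra].
    unfold sumI. apply sum_f_R0_le_mean. intros i. apply sum_f_R0_le_mean. intros j.
    apply Rabs_mult_le_mean.
Qed.

Theorem lemma7 (alpha beta sG : R -> R) (rho : R) (l m r : nat -> nat -> R)
  (Halpha : holder01 alpha) (Hbeta : holder01 beta) (HsG : holder01 sG)
  (HsGpos : forall t, 0 <= t <= 1 -> 0 < sG t)
  (Hpart : partition rho l m r)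
  (n k p q : nat) (Hnk : inI n k) (Hpq : inI p q) :
  let F := fun i j => Gmat alpha beta sG l m r i j n k * Gmat alpha beta sG l m r i j p q in
  ex_finite_lim_seq (sumI (fun i j => Rabs (F i j))) /\
  is_lim_seq (sumI F)
    (RInt (fun t =>
       (phi alpha sG l m r n k t + (alpha t - beta t) / sG t * psi alpha sG l m r n k t) *
       (phi alpha sG l m r p q t + (alpha t - beta t) / sG t * psi alpha sG l m r p q t))
       0 1).
Proof.
  intros F.
  pose proof (sumI_Gmat_cvg alpha beta sG rho l m r Halpha Hbeta HsG HsGpos Hpart) as Hcvg.
  split.
  - exact (sumI_abs_mul_ex_lim _ _ _ _ (Hcvg n k n k Hnk Hnk) (Hcvg p q p q Hpq Hpq)).
  - exact (Hcvg n k p q Hnk Hpq).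
Qed.
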